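(* Let $\mathcal{A}$ and $\mathcal{B}$ be $C^{*}$-algebras, let $\Xi$ be a Hilbert $\mathcal{A}$-module and $\nabla$ a Hilbert $\mathcal{B}$-module. Let $f:\Xi \rightarrow \nabla$ be a mapping for which there exists a function $\varphi:\Xi^{3}\rightarrow[0,\infty)$ such that $$\| f(\mu x+y)-\mu f(x)-f(y)\| \leq \varphi(x,y,0),$$ $$\| f(\langle x,y\rangle z)-\langle f(x),f(y)\rangle f(z)\| \leq \varphi(x,y,z),$$ $$\| f(\langle x,y\rangle^{*} z)-\langle f(x),f(y)\rangle^{*} f(z)\| \leq \varphi(x,y,z)$$ for all $x,y,z\in\Xi$ and all $\mu\in\mathbb{T}$. If there exists $0\leq L<1$ such that $\varphi(x,y,z)\leq 2L\,\varphi\left(\frac{x}{2},\frac{y}{2},\frac{z}{2}\right)$ for all $x,y,z\in\Xi$, then there exists a unique Hilbert $C^{*}$-module $\ast$-homomorphism $H:\Xi\rightarrow\nabla$ such that $$\|f(x)-H(x)\|\leq \frac{1}{2-2L}\varphi(x,x,0)$$ for all $x\in\Xi$.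
   Context: $\mathbb{T}=\{z\in\mathbb{C}:|z|=1\}$. For a $C^{*}$-algebra $\mathcal{A}$, a (left) Hilbert $\mathcal{A}$-module is a complex linear space $\Xi$ with a compatible left $\mathcal{A}$-module action ($\lambda(ax)=(\lambda a)x=a(\lambda x)$) and a map $\langle\cdot,\cdot\rangle:\Xi\times\Xi\to\mathcal{A}$ that is linear in the first variable, satisfies $\langle ax,y\rangle=a\langle x,y\rangle$, $\langle x,y\rangle^{*}=\langle y,x\rangle$, $\langle x,x\rangle\geq 0$ with equality iff $x=0$, and such that $\Xi$ is complete in the norm $\|x\|=\|\langle x,x\rangle\|^{1/2}$. For a Hilbert $\mathcal{A}$-module $\Xi$ and a Hilbert $\mathcal{B}$-module $\nabla$, a Hilbert $C^{*}$-module homomorphism is a $\mathbb{C}$-linear map $H:\Xi\to\nabla$ with $H(\langle x,y\rangle z)=\langle H(x),H(y)\rangle H(z)$ for all $x,y,z\in\Xi$; it is a Hilbert $C^{*}$-module $\ast$-homomorphism if moreover $H(\langle x,y\rangle^{*} z)=\langle H(x),H(y)\rangle^{*} H(z)$ for all $x,y,z\in\Xi$. *)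

From Stdlib Require Import Reals.
From Coquelicot Require Import Coquelicot.
Open Scope R_scope.

Record CStarAlgebra := {
  ca_car :> CompleteNormedModule C_AbsRing;
  ca_mul : ca_car -> ca_car -> ca_car;
  ca_star : ca_car -> ca_car;
  ca_mulA : forall a b c, ca_mul a (ca_mul b c) = ca_mul (ca_mul a b) c;
  ca_mulDl : forall a b c, ca_mul (plus a b) c = plus (ca_mul a c) (ca_mul b c);
  ca_mulDr : forall a b c, ca_mul a (plus b c) = plus (ca_mul a b) (ca_mul a c);
  ca_mulZl : forall (l : C) a b, ca_mul (scal l a) b = scal l (ca_mul a b);
  ca_mulZr : forall (l : C) a b, ca_mul a (scal l b) = scal l (ca_mul a b);
  ca_starK : forall a, ca_star (ca_star a) = a;
  ca_starD : forall a b, ca_star (plus a b) = plus (ca_star a) (ca_star b);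
  ca_starZ : forall (l : C) a, ca_star (scal l a) = scal (Cconj l) (ca_star a);
  ca_starM : forall a b, ca_star (ca_mul a b) = ca_mul (ca_star b) (ca_star a);
  ca_norm_mul : forall a b, norm (ca_mul a b) <= norm a * norm b;
  ca_cstar : forall a, norm (ca_mul (ca_star a) a) = norm a * norm a
}.

Definition ca_pos (A : CStarAlgebra) (a : A) : Prop :=
  exists b : A, a = ca_mul A (ca_star A b) b.

Record HilbertModule (A : CStarAlgebra) := {
  hm_car :> CompleteNormedModule C_AbsRing;
  hm_act : A -> hm_car -> hm_car;
  hm_ip : hm_car -> hm_car -> A;
  hm_actDl : forall (a b : A) x, hm_act (plus a b) x = plus (hm_act a x) (hm_act b x);
  hm_actDr : forall (a : A) x y, hm_act a (plus x y) = plus (hm_act a x) (hm_act a y);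
  hm_actM : forall (a b : A) x, hm_act (ca_mul A a b) x = hm_act a (hm_act b x);
  hm_actZl : forall (l : C) (a : A) x, scal l (hm_act a x) = hm_act (scal l a) x;
  hm_actZr : forall (l : C) (a : A) x, scal l (hm_act a x) = hm_act a (scal l x);
  hm_ipDl : forall x y z, hm_ip (plus x y) z = plus (hm_ip x z) (hm_ip y z);
  hm_ipZl : forall (l : C) x y, hm_ip (scal l x) y = scal l (hm_ip x y);
  hm_ipAl : forall (a : A) x y, hm_ip (hm_act a x) y = ca_mul A a (hm_ip x y);
  hm_ip_star : forall x y, ca_star A (hm_ip x y) = hm_ip y x;
  hm_ip_pos : forall x, ca_pos A (hm_ip x x);
  hm_ip_eq0 : forall x, hm_ip x x = zero <-> x = zero;
  hm_norm : forall x, norm x = sqrt (norm (hm_ip x x))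
}.

Arguments hm_act {A} h _ _.
Arguments hm_ip {A} h _ _.

Definition is_hm_star_hom {A B : CStarAlgebra} (X : HilbertModule A)
    (Y : HilbertModule B) (H : X -> Y) : Prop :=
  (forall x y, H (plus x y) = plus (H x) (H y)) /\
  (forall (l : C) x, H (scal l x) = scal l (H x)) /\
  (forall x y z, H (hm_act X (hm_ip X x y) z) = hm_act Y (hm_ip Y (H x) (H y)) (H z)) /\
  (forall x y z, H (hm_act X (ca_star A (hm_ip X x y)) z)
                 = hm_act Y (ca_star B (hm_ip Y (H x) (H y))) (H z)).

From Stdlib Require Import Reals Lra Lia.
From Coquelicot Require Import Coquelicot.
Open Scope R_scope.

(* Hyers' direct method.  Since f(2x) is within phi(x,x,0) of 2 f(x) and dilating
   the arguments of phi by 2^n multiplies it by at most (2L)^n, the sequence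
   2^-n f(2^n x) is Cauchy at rate L^n; its limit H is within
   phi(x,x,0) / (2 - 2L) of f.  H is additive and commutes with unimodular
   scalars, hence is C-linear, because every real r in [0, 2] is the sum of the
   two unimodular numbers r/2 +- i sqrt(1 - r^2/4).  The triple product
   <x,y>z is cubic, so 8^-n f(<2^n x, 2^n y> 2^n z) is a term of the sequence
   defining H(<x,y>z) and lies within L^n phi(x,y,z) of the triple product of
   the n-th approximants of H x, H y, H z; continuity of the triple product
   (from ||<x,y>|| <= 4 ||x|| ||y||, a polarization bound) gives
   H(<x,y>z) = <Hx,Hy>Hz.  Finally, two maps commuting with doubling and both
   within c phi(x,x,0) of f differ at x by at most 2 c L^n phi(x,x,0). *)

Lemma geom_eventually_lt (c L eps : R) :
  0 <= L < 1 -> 0 < eps -> exists N, c * L ^ N < eps.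
Proof.
intros HL Heps.
destruct (Rle_lt_dec c 0) as [Hc | Hc].
- exists 0%nat. simpl. lra.
- destruct (pow_lt_1_zero L ltac:(rewrite Rabs_pos_eq; lra) (eps / c)) as [N HN].
  { apply Rdiv_lt_0_compat; assumption. }
  exists N. specialize (HN N (le_n N)).
  rewrite Rabs_pos_eq in HN by (apply pow_le; lra).
  apply (Rmult_lt_compat_l c) in HN; [| exact Hc].
  replace (c * (eps / c)) with eps in HN by (field; lra). exact HN.
Qed.

Lemma Rle_0_of_le_geom (c L d : R) :
  0 <= L < 1 -> (forall n, d <= c * L ^ n) -> d <= 0.
Proof.
intros HL Hd. destruct (Rle_lt_dec d 0) as [Hle | Hpos]; [exact Hle |].
destruct (geom_eventually_lt c L d HL Hpos) as [N HN].
specialize (Hd N). lra.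
Qed.

Lemma pow_le_pow_le_1 (x : R) (m n : nat) : 0 <= x <= 1 -> (m <= n)%nat -> x ^ n <= x ^ m.
Proof.
intros Hx Hmn. replace n with (m + (n - m))%nat by lia. rewrite pow_add.
rewrite <- (Rmult_1_r (x ^ m)) at 2. apply Rmult_le_compat_l; [apply pow_le; lra |].
rewrite <- (pow1 (n - m)). apply pow_incr. lra.
Qed.

Lemma Rinv_pow2_mult_pow (L c : R) (n : nat) : / 2 ^ n * ((2 * L) ^ n * c) = L ^ n * c.
Proof. rewrite Rpow_mult_distr. field. apply pow_nonzero. lra. Qed.

Lemma Cconj_RtoC (r : R) : Cconj (RtoC r) = RtoC r.
Proof. apply injective_projections; simpl; ring. Qed.

(* Coquelicot's lemmas on normed modules do not unify with terms built over a
   [CompleteNormedModule], whose operations are packed differently, so the ones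
   we need are restated for it; results are cast to [V] so that they use the
   same packing as other terms over [V]. *)
Module CNM.
Section Restate.
Context {V : CompleteNormedModule C_AbsRing}.
Let NV := CompleteNormedModule.NormedModule C_AbsRing V.
Let MV := CompleteNormedModule.ModuleSpace C_AbsRing V.

Lemma norm_triangle (x y : V) : norm (plus x y) <= norm x + norm y.
Proof. exact (@Hierarchy.norm_triangle _ NV x y). Qed.
Lemma norm_opp (x : V) : norm (opp x) = norm x.
Proof. exact (@Hierarchy.norm_opp _ NV x). Qed.
Lemma norm_scal (l : C) (x : V) : norm (scal l x) <= Cmod l * norm x.
Proof. exact (@Hierarchy.norm_scal _ NV l x). Qed.
Lemma norm_eq_zero (x : V) : norm x = 0 -> x = zero.
Proof. exact (@Hierarchy.norm_eq_zero _ NV x). Qed.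
Lemma norm_zero : norm (@zero V) = 0.
Proof. exact (@Hierarchy.norm_zero _ NV). Qed.
Lemma norm_compat1 (x y : V) (eps : R) : norm (minus y x) < eps -> ball x eps y.
Proof. exact (@Hierarchy.norm_compat1 _ NV x y eps). Qed.
Lemma norm_compat2 (x y : V) (eps : posreal) :
  ball x eps y -> norm (minus y x) < @norm_factor _ NV * eps.
Proof. exact (@Hierarchy.norm_compat2 _ NV x y eps). Qed.
Lemma norm_triangle_inv (x y : V) : Rabs (norm x - norm y) <= norm (minus x y).
Proof. exact (@Hierarchy.norm_triangle_inv _ NV x y). Qed.
Lemma scal_distr_l (l : C) (x y : V) :
  scal l (plus x y) = plus (scal l x : V) (scal l y : V).
Proof. exact (@Hierarchy.scal_distr_l _ MV l x y). Qed.
Lemma scal_distr_r (l m : C) (x : V) : scal (l + m)%C x = plus (scal l x : V) (scal m x : V).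
Proof. exact (@Hierarchy.scal_distr_r _ MV l m x). Qed.
Lemma scal_assoc (l m : C) (x : V) : scal l (scal m x) = scal (l * m)%C x.
Proof. exact (@Hierarchy.scal_assoc _ MV l m x). Qed.
Lemma scal_one (x : V) : scal (RtoC 1) x = x.
Proof. exact (@Hierarchy.scal_one _ MV x). Qed.
Lemma scal_zero_l (x : V) : @eq V (scal (RtoC 0) x) zero.
Proof. exact (@Hierarchy.scal_zero_l _ MV x). Qed.
Lemma scal_zero_r (l : C) : @eq V (scal l zero) zero.
Proof. exact (@Hierarchy.scal_zero_r _ MV l). Qed.
Lemma scal_minus_distr_l (l : C) (x y : V) :
  scal l (minus x y) = minus (scal l x : V) (scal l y : V).
Proof. exact (@Hierarchy.scal_minus_distr_l _ MV l x y). Qed.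
Lemma scal_opp_one (x : V) : @eq V (scal (RtoC (-1)) x) (opp x).
Proof.
transitivity (@scal _ MV (opp one) x).
- f_equal. apply injective_projections; simpl; ring.
- exact (@Hierarchy.scal_opp_one _ MV x).
Qed.
End Restate.
End CNM.

Section NormedFacts.
Context {V : CompleteNormedModule C_AbsRing}.

Lemma norm_minus_triangle (a b c : V) :
  norm (minus a b) <= norm (minus a c) + norm (minus c b).
Proof. rewrite (minus_trans c). apply CNM.norm_triangle. Qed.

Lemma norm_minus_sym (a b : V) : norm (minus a b) = norm (minus b a).
Proof. rewrite <- opp_minus. apply CNM.norm_opp. Qed.

Lemma norm_minus_le_0_eq (a b : V) : norm (minus a b) <= 0 -> a = b.
Proof.
intro H. apply plus_reg_r with (opp b). rewrite plus_opp_r.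
apply CNM.norm_eq_zero, Rle_antisym; [exact H | apply norm_ge_0].
Qed.

Lemma norm_scal_R (r : R) (x : V) : norm (scal (RtoC r) x) <= Rabs r * norm x.
Proof. rewrite <- Cmod_R. apply CNM.norm_scal. Qed.

Lemma scal_RtoC_mult (a b : R) (x : V) :
  scal (RtoC a) (scal (RtoC b) x) = scal (RtoC (a * b)) x.
Proof. rewrite CNM.scal_assoc, RtoC_mult. reflexivity. Qed.

Lemma scal_RtoC_2 (x : V) : scal (RtoC 2) x = plus x x.
Proof.
replace (RtoC 2) with (RtoC 1 + RtoC 1)%C
  by (apply injective_projections; simpl; ring).
rewrite CNM.scal_distr_r, CNM.scal_one. reflexivity.
Qed.

Lemma norm_le_minus_plus (a b : V) : norm a <= norm (minus a b) + norm b.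
Proof.
generalize (CNM.norm_triangle_inv a b) (Rle_abs (norm a - norm b)). lra.
Qed.

Lemma norm_minus_le (a b : V) : norm (minus a b) <= norm a + norm b.
Proof. rewrite <- (CNM.norm_opp b). apply CNM.norm_triangle. Qed.

Lemma norm_le_half_plus_self (a : V) : norm a <= / 2 * norm (plus a a).
Proof.
replace a with (scal (RtoC (/ 2)) (plus a a)) at 1.
- eapply Rle_trans; [apply norm_scal_R |]. rewrite Rabs_pos_eq; lra.
- rewrite <- scal_RtoC_2, scal_RtoC_mult.
  replace (/ 2 * 2) with 1 by field. apply CNM.scal_one.
Qed.

Lemma scal_pow2_S (n : nat) (x : V) :
  scal (RtoC (2 ^ S n)) x = scal (RtoC 2) (scal (RtoC (2 ^ n)) x).
Proof. rewrite scal_RtoC_mult. reflexivity. Qed.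

Lemma norm_minus_geometric (u : nat -> V) (c L : R) :
  (forall n, norm (minus (u (S n)) (u n)) <= c * (1 - L) * L ^ n) ->
  forall n k, norm (minus (u (n + k)%nat) (u n)) <= c * (L ^ n - L ^ (n + k)).
Proof.
intros Hstep n k. induction k as [|k IH].
- rewrite Nat.add_0_r, minus_eq_zero, Rminus_diag, Rmult_0_r.
  apply Req_le, CNM.norm_zero.
- eapply Rle_trans; [apply (norm_minus_triangle _ _ (u (n + k)%nat)) |].
  rewrite Nat.add_succ_r.
  eapply Rle_trans; [apply Rplus_le_compat; [apply Hstep | apply IH] |].
  right. simpl. ring.
Qed.

Lemma norm_minus_lim_geometric (u : nat -> V) (c L : R) : 0 <= L < 1 ->
  (forall n, norm (minus (u (S n)) (u n)) <= c * (1 - L) * L ^ n) ->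
  forall n, norm (minus (u n) (lim (filtermap u eventually))) <= c * L ^ n.
Proof.
intros HL Hstep.
assert (Hc : 0 <= c).
{ specialize (Hstep 0%nat). simpl in Hstep.
  generalize (norm_ge_0 (minus (u 1%nat) (u 0%nat))). nra. }
assert (Hcauchy : forall n k, norm (minus (u (n + k)%nat) (u n)) <= c * L ^ n).
{ intros n k. eapply Rle_trans; [apply (norm_minus_geometric u c L Hstep) |].
  generalize (pow_le L (n + k) ltac:(lra)). nra. }
set (F := filtermap u eventually).
assert (PF : ProperFilter F) by (apply filtermap_proper_filter, eventually_filter).
assert (CF : cauchy F).
{ intro eps. destruct (geom_eventually_lt c L eps HL (cond_pos eps)) as [N HN].
  exists (u N), N. intros m Hm. apply CNM.norm_compat1.
  replace m with (N + (m - N))%nat by lia.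
  eapply Rle_lt_trans; [apply Hcauchy | exact HN]. }
intro n. apply Rle_plus_epsilon. intros eps Heps.
set (nf := @norm_factor _ (CompleteNormedModule.NormedModule C_AbsRing V)).
assert (He : 0 < eps / nf) by (apply Rdiv_lt_0_compat; [assumption | apply norm_factor_gt_0]).
destruct (complete_cauchy F PF CF (mkposreal _ He)) as [N HN].
specialize (HN (n + N)%nat ltac:(lia)).
apply CNM.norm_compat2 in HN. simpl in HN. fold nf in HN.
replace (nf * (eps / nf)) with eps in HN
  by (field; apply Rgt_not_eq, norm_factor_gt_0).
eapply Rle_trans; [apply (norm_minus_triangle _ _ (u (n + N)%nat)) |].
rewrite norm_minus_sym.
apply Rplus_le_compat; [apply Hcauchy | lra].
Qed.

End NormedFacts.

Section GroupIdentities.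
Context {G : AbelianGroup}.

Lemma minus_plus_opp (a b : G) : minus a b = plus a (opp b).
Proof. reflexivity. Qed.

Lemma plus_plus_swap (a b c d : G) :
  plus (plus a b) (plus c d) = plus (plus a c) (plus b d).
Proof.
rewrite <- !plus_assoc. f_equal. rewrite !plus_assoc. f_equal. apply plus_comm.
Qed.

Lemma minus_plus_plus (a b c d : G) :
  minus (plus a b) (plus c d) = plus (minus a c) (minus b d).
Proof. rewrite !minus_plus_opp, opp_plus. apply plus_plus_swap. Qed.

Lemma polarization_identity (P Q R S : G) :
  minus (plus (plus P Q) (plus R S)) (minus (minus P Q) (minus R S))
  = plus (plus Q R) (plus Q R).
Proof.
replace (minus (minus P Q) (minus R S)) with (plus (plus P (opp Q)) (plus (opp R) S))
  by (rewrite !minus_plus_opp, opp_plus, opp_opp; reflexivity).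
rewrite !minus_plus_plus, !minus_eq_zero, plus_zero_l, plus_zero_r.
rewrite !minus_plus_opp, !opp_opp. apply plus_plus_swap.
Qed.
End GroupIdentities.

Section Additive.
Context {G K : AbelianGroup} (g : G -> K).
Hypothesis g_plus : forall a b, g (plus a b) = plus (g a) (g b).

Lemma additive_zero : g zero = zero.
Proof. apply (plus_reg_l (g zero)). rewrite <- g_plus, !plus_zero_r. reflexivity. Qed.

Lemma additive_opp a : g (opp a) = opp (g a).
Proof.
apply (plus_reg_l (g a)). rewrite <- g_plus, !plus_opp_r. apply additive_zero.
Qed.

Lemma additive_minus a b : g (minus a b) = minus (g a) (g b).
Proof. rewrite !minus_plus_opp, g_plus, additive_opp. reflexivity. Qed.
End Additive.

Section UnimodularLinear.
Context {V W : CompleteNormedModule C_AbsRing} (g : V -> W).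
Hypothesis g_plus : forall x y, g (plus x y) = plus (g x) (g y).
Hypothesis g_unimodular :
  forall (mu : C) x, Cmod mu = 1 -> g (scal mu x) = scal mu (g x).

Lemma additive_scal_nat (n : nat) x :
  g (scal (RtoC (INR n)) x) = scal (RtoC (INR n)) (g x).
Proof.
induction n as [|n IH].
- rewrite !CNM.scal_zero_l. exact (additive_zero g g_plus).
- replace (RtoC (INR (S n))) with (RtoC (INR n) + RtoC 1)%C
    by (rewrite S_INR; apply injective_projections; simpl; ring).
  rewrite !CNM.scal_distr_r, !CNM.scal_one, g_plus, IH. reflexivity.
Qed.

Lemma unimodular_scal_le_2 (r : R) x :
  0 <= r <= 2 -> g (scal (RtoC r) x) = scal (RtoC r) (g x).
Proof.
intro Hr.
set (q := sqrt (1 - r * r / 4)).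
assert (Hq : q * q = 1 - r * r / 4) by (apply sqrt_sqrt; nra).
assert (Hmod : forall s, s * s = q * q -> Cmod (r / 2, s) = 1).
{ intros s Hs. unfold Cmod. simpl.
  replace (r / 2 * (r / 2 * 1) + s * (s * 1)) with 1 by nra. apply sqrt_1. }
replace (RtoC r) with (Cplus (r / 2, q) (r / 2, - q))
  by (apply injective_projections; simpl; field).
rewrite !CNM.scal_distr_r, g_plus, !g_unimodular by (apply Hmod; ring).
reflexivity.
Qed.

Lemma unimodular_scal_nonneg (r : R) x :
  0 <= r -> g (scal (RtoC r) x) = scal (RtoC r) (g x).
Proof.
intro Hr. destruct (nfloor_ex r Hr) as [n [_ Hn]].
assert (Hn0 := pos_INR n).
replace (RtoC r) with (Cmult (RtoC (INR (S n))) (RtoC (r / INR (S n))))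
  by (rewrite S_INR; apply injective_projections; simpl; field; lra).
rewrite <- !CNM.scal_assoc, additive_scal_nat, unimodular_scal_le_2.
- reflexivity.
- rewrite S_INR. split; [apply Rdiv_le_0_compat; lra |].
  apply Rmult_le_reg_r with (INR n + 1); [lra |].
  unfold Rdiv. rewrite Rmult_assoc, Rinv_l; lra.
Qed.

Lemma unimodular_additive_linear (l : C) x : g (scal l x) = scal l (g x).
Proof.
destruct (Req_dec (Cmod l) 0) as [E | E].
- apply Cmod_eq_0 in E. subst l. rewrite !CNM.scal_zero_l. exact (additive_zero g g_plus).
- assert (Hl : 0 < Cmod l) by (generalize (Cmod_ge_0 l); lra).
  set (u := Cmult l (RtoC (/ Cmod l))).
  assert (Hu : Cmod u = 1).
  { unfold u. rewrite Cmod_mult, Cmod_R, Rabs_pos_eq; [field; lra |].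
    apply Rlt_le, Rinv_0_lt_compat, Hl. }
  replace l with (Cmult (RtoC (Cmod l)) u).
  + rewrite <- !CNM.scal_assoc, unimodular_scal_nonneg, (g_unimodular u _ Hu)
      by apply Cmod_ge_0.
    reflexivity.
  + unfold u. rewrite Cmult_comm, <- Cmult_assoc, <- RtoC_mult, Rinv_l, Cmult_1_r by lra.
    reflexivity.
Qed.
End UnimodularLinear.

Lemma Ci_polarization {V : CompleteNormedModule C_AbsRing} (P Q : V) :
  plus P P = plus (plus P Q) (scal Ci (plus (scal (Cconj Ci) P : V) (scal Ci Q : V))).
Proof.
rewrite CNM.scal_distr_l, !CNM.scal_assoc.
replace (Cmult Ci (Cconj Ci)) with (RtoC 1)
  by (apply injective_projections; simpl; ring).
replace (Cmult Ci Ci) with (RtoC (-1))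
  by (apply injective_projections; simpl; ring).
rewrite CNM.scal_one, CNM.scal_opp_one.
rewrite (@plus_plus_swap (CompleteNormedModule.AbelianGroup C_AbsRing V)).
rewrite plus_opp_r, plus_zero_r.
reflexivity.
Qed.

Lemma ca_norm_star (A : CStarAlgebra) (a : A) : norm (ca_star A a) = norm a.
Proof.
assert (Hle : forall b : A, norm b <= norm (ca_star A b)).
{ intro b. assert (Hc := ca_cstar A b). assert (Hm := ca_norm_mul A (ca_star A b) b).
  assert (Hb := norm_ge_0 b). assert (Hb' := norm_ge_0 (ca_star A b)).
  destruct (Req_dec (norm b) 0) as [E | E]; [lra | nra]. }
apply Rle_antisym; [| apply Hle].
rewrite <- (ca_starK A a) at 2. apply Hle.
Qed.

Section HilbertModuleFacts.
Variables (A : CStarAlgebra) (X : HilbertModule A).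
Notation ip := (hm_ip X).
Notation act := (hm_act X).

Lemma hm_ip_plus_r (x y z : X) : ip x (plus y z) = plus (ip x y) (ip x z).
Proof. rewrite <- (hm_ip_star _ X (plus y z) x), hm_ipDl, ca_starD, !hm_ip_star. reflexivity. Qed.

Lemma hm_ip_scal_r (l : C) (x y : X) : ip x (scal l y) = scal (Cconj l) (ip x y).
Proof. rewrite <- (hm_ip_star _ X (scal l y) x), hm_ipZl, ca_starZ, hm_ip_star. reflexivity. Qed.

Lemma hm_ip_minus_l (x y z : X) : ip (minus x y) z = minus (ip x z) (ip y z).
Proof. apply (additive_minus (fun x => ip x z)). intros; apply hm_ipDl. Qed.

Lemma hm_ip_minus_r (x y z : X) : ip x (minus y z) = minus (ip x y) (ip x z).
Proof. apply (additive_minus (ip x)). intros; apply hm_ip_plus_r. Qed.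

Lemma hm_act_minus_l (a b : A) (x : X) : act (minus a b) x = minus (act a x) (act b x).
Proof. apply (additive_minus (fun a => act a x)). intros; apply hm_actDl. Qed.

Lemma hm_act_minus_r (a : A) (x y : X) : act a (minus x y) = minus (act a x) (act a y).
Proof. apply (additive_minus (act a)). intros; apply hm_actDr. Qed.

Lemma norm_hm_ip_self (x : X) : norm (ip x x) = norm x * norm x.
Proof. rewrite (hm_norm _ X x), sqrt_sqrt by apply norm_ge_0. reflexivity. Qed.

Lemma norm_hm_act_le (a : A) (x : X) : norm (act a x) <= norm a * norm x.
Proof.
assert (E : ip (act a x) (act a x) = ca_mul A a (ca_mul A (ip x x) (ca_star A a))).
{ rewrite hm_ipAl. f_equal.
  rewrite <- (hm_ip_star _ X (act a x) x), hm_ipAl, ca_starM, hm_ip_star. reflexivity. }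
assert (Hsq : norm (act a x) * norm (act a x) <= (norm a * norm x) * (norm a * norm x)).
{ rewrite <- norm_hm_ip_self, E.
  eapply Rle_trans; [apply ca_norm_mul |].
  eapply Rle_trans; [apply Rmult_le_compat_l; [apply norm_ge_0 | apply ca_norm_mul] |].
  rewrite ca_norm_star, norm_hm_ip_self. right. ring. }
apply Rsqr_incr_0_var; [exact Hsq | apply Rmult_le_pos; apply norm_ge_0].
Qed.

Definition hm_ip_sym (x y : X) : A := plus (ip x y) (ip y x).

Lemma norm_hm_ip_sym_le (x y : X) :
  norm (hm_ip_sym x y) <= (norm x + norm y) * (norm x + norm y).
Proof.
assert (E : plus (hm_ip_sym x y) (hm_ip_sym x y)
            = minus (ip (plus x y) (plus x y)) (ip (minus x y) (minus x y))).
{ rewrite !hm_ipDl, !hm_ip_plus_r, !hm_ip_minus_l, !hm_ip_minus_r.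
  symmetry. exact (@polarization_identity (CompleteNormedModule.AbelianGroup C_AbsRing A) _ _ _ _). }
eapply Rle_trans; [apply norm_le_half_plus_self |]. rewrite E.
eapply Rle_trans; [apply Rmult_le_compat_l; [lra | apply norm_minus_le] |].
rewrite !norm_hm_ip_self.
assert (Hp := CNM.norm_triangle x y). assert (Hm := norm_minus_le x y).
assert (Hp0 := norm_ge_0 (plus x y)). assert (Hm0 := norm_ge_0 (minus x y)).
nra.
Qed.

Lemma norm_hm_ip_le_sqr (x y : X) :
  norm (ip x y) <= (norm x + norm y) * (norm x + norm y).
Proof.
assert (E : plus (ip x y) (ip x y)
            = plus (hm_ip_sym x y) (scal Ci (hm_ip_sym x (scal Ci y)))).
{ unfold hm_ip_sym. rewrite hm_ip_scal_r, hm_ipZl. apply Ci_polarization. }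
assert (Hiy : norm (scal Ci y) <= norm y).
{ eapply Rle_trans; [apply CNM.norm_scal | rewrite Cmod_Ci; lra]. }
eapply Rle_trans; [apply norm_le_half_plus_self |]. rewrite E.
eapply Rle_trans; [apply Rmult_le_compat_l; [lra | apply CNM.norm_triangle] |].
eapply Rle_trans.
{ apply Rmult_le_compat_l; [lra |]. apply Rplus_le_compat_l.
  eapply Rle_trans; [apply CNM.norm_scal |]. rewrite Cmod_Ci, Rmult_1_l.
  apply norm_hm_ip_sym_le. }
assert (H1 := norm_hm_ip_sym_le x y).
assert (Hx := norm_ge_0 x). assert (Hy := norm_ge_0 (scal Ci y)).
assert (H2 : (norm x + norm (scal Ci y)) * (norm x + norm (scal Ci y))
             <= (norm x + norm y) * (norm x + norm y)) by (apply Rmult_le_compat; lra).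
lra.
Qed.

Lemma hm_ip_zero_l (y : X) : ip zero y = zero.
Proof. exact (additive_zero (fun x => ip x y) (fun a b => hm_ipDl _ X a b y)). Qed.

Lemma hm_ip_zero_r (x : X) : ip x zero = zero.
Proof. exact (additive_zero (ip x) (hm_ip_plus_r x)). Qed.

Lemma norm_hm_ip_le (x y : X) : norm (ip x y) <= 4 * norm x * norm y.
Proof.
assert (Hx0 := norm_ge_0 x). assert (Hy0 := norm_ge_0 y).
destruct (Req_dec (norm x) 0) as [Ex | Ex].
{ apply CNM.norm_eq_zero in Ex. rewrite Ex, hm_ip_zero_l, !CNM.norm_zero. lra. }
destruct (Req_dec (norm y) 0) as [Ey | Ey].
{ apply CNM.norm_eq_zero in Ey. rewrite Ey, hm_ip_zero_r, !CNM.norm_zero. lra. }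
set (a := sqrt (norm x)). set (b := sqrt (norm y)).
assert (Ha : 0 < a) by (apply sqrt_lt_R0; lra).
assert (Hb : 0 < b) by (apply sqrt_lt_R0; lra).
assert (Ea : norm x = a * a) by (symmetry; apply sqrt_sqrt; lra).
assert (Eb : norm y = b * b) by (symmetry; apply sqrt_sqrt; lra).
assert (E : ip x y = ip (scal (RtoC (b / a)) x) (scal (RtoC (a / b)) y)).
{ rewrite hm_ipZl, hm_ip_scal_r, Cconj_RtoC, scal_RtoC_mult.
  replace (b / a * (a / b)) with 1 by (field; lra). symmetry. apply CNM.scal_one. }
assert (Hx' : norm (scal (RtoC (b / a)) x) <= a * b).
{ eapply Rle_trans; [apply norm_scal_R |].
  rewrite Rabs_pos_eq, Ea by (apply Rlt_le, Rdiv_lt_0_compat; lra). right. field. lra. }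
assert (Hy' : norm (scal (RtoC (a / b)) y) <= a * b).
{ eapply Rle_trans; [apply norm_scal_R |].
  rewrite Rabs_pos_eq, Eb by (apply Rlt_le, Rdiv_lt_0_compat; lra). right. field. lra. }
rewrite E. eapply Rle_trans; [apply norm_hm_ip_le_sqr |].
rewrite Ea, Eb.
assert (Hx'0 := norm_ge_0 (scal (RtoC (b / a)) x)).
assert (Hy'0 := norm_ge_0 (scal (RtoC (a / b)) y)).
apply Rle_trans with ((a * b + a * b) * (a * b + a * b)); [apply Rmult_le_compat; lra |].
right. ring.
Qed.

Definition hm_triple (x y z : X) : X := act (ip x y) z.

Lemma norm_hm_triple_le (x y z : X) :
  norm (hm_triple x y z) <= 4 * norm x * norm y * norm z.
Proof.
eapply Rle_trans; [apply norm_hm_act_le |].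
apply Rmult_le_compat_r; [apply norm_ge_0 | apply norm_hm_ip_le].
Qed.

Lemma norm_hm_triple_minus_le (x y z x' y' z' : X) :
  norm (minus (hm_triple x' y' z') (hm_triple x y z))
  <= 4 * (norm (minus x' x) * norm y' * norm z' + norm x * norm (minus y' y) * norm z'
          + norm x * norm y * norm (minus z' z)).
Proof.
eapply Rle_trans; [apply (norm_minus_triangle _ _ (hm_triple x y' z')) |].
eapply Rle_trans; [apply Rplus_le_compat_l, (norm_minus_triangle _ _ (hm_triple x y z')) |].
unfold hm_triple.
rewrite <- hm_act_minus_l, <- hm_ip_minus_l, <- hm_act_minus_l, <- hm_ip_minus_r,
  <- hm_act_minus_r.
generalize (norm_hm_triple_le (minus x' x) y' z') (norm_hm_triple_le x (minus y' y) z')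
  (norm_hm_triple_le x y (minus z' z)).
unfold hm_triple. lra.
Qed.

Lemma norm_hm_triple_minus_le_scaled (x y z x' y' z' : X) (p dx dy dz : R) :
  0 <= p <= 1 -> 0 <= dy -> 0 <= dz ->
  norm (minus x' x) <= p * dx -> norm (minus y' y) <= p * dy ->
  norm (minus z' z) <= p * dz ->
  norm (minus (hm_triple x' y' z') (hm_triple x y z))
  <= p * (4 * (dx * (norm y + dy) * (norm z + dz) + norm x * dy * (norm z + dz)
               + norm x * norm y * dz)).
Proof.
intros Hp Hdy Hdz Hx Hy Hz.
assert (Hy' : norm y' <= norm y + dy)
  by (generalize (norm_le_minus_plus y' y); nra).
assert (Hz' : norm z' <= norm z + dz)
  by (generalize (norm_le_minus_plus z' z); nra).
assert (Mono : forall a1 a2 a3 b1 b2 b3, 0 <= a1 <= b1 -> 0 <= a2 <= b2 -> 0 <= a3 <= b3 ->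
          a1 * a2 * a3 <= b1 * b2 * b3).
{ intros a1 a2 a3 b1 b2 b3 H1 H2 H3.
  apply Rmult_le_compat; try apply Rmult_le_compat; try apply Rmult_le_pos; lra. }
assert (T1 := Mono _ _ _ _ _ _ (conj (norm_ge_0 (minus x' x)) Hx) (conj (norm_ge_0 y') Hy')
                   (conj (norm_ge_0 z') Hz')).
assert (T2 := Mono _ _ _ _ _ _ (conj (norm_ge_0 x) (Rle_refl (norm x)))
                   (conj (norm_ge_0 (minus y' y)) Hy) (conj (norm_ge_0 z') Hz')).
assert (T3 := Mono _ _ _ _ _ _ (conj (norm_ge_0 x) (Rle_refl (norm x)))
                   (conj (norm_ge_0 y) (Rle_refl (norm y))) (conj (norm_ge_0 (minus z' z)) Hz)).
eapply Rle_trans; [apply norm_hm_triple_minus_le |]. nra.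
Qed.

Lemma hm_triple_scal_R (r : R) (x y z : X) :
  hm_triple (scal (RtoC r) x) (scal (RtoC r) y) (scal (RtoC r) z)
  = scal (RtoC (r * r * r)) (hm_triple x y z).
Proof.
unfold hm_triple.
rewrite hm_ipZl, hm_ip_scal_r, Cconj_RtoC, scal_RtoC_mult, <- hm_actZl, <- hm_actZr.
apply scal_RtoC_mult.
Qed.

End HilbertModuleFacts.

Lemma doubling_pow2 {V W : CompleteNormedModule C_AbsRing} (g : V -> W)
  (g_double : forall x, g (scal (RtoC 2) x) = scal (RtoC 2) (g x)) (n : nat) (x : V) :
  g (scal (RtoC (2 ^ n)) x) = scal (RtoC (2 ^ n)) (g x).
Proof.
induction n as [|n IH].
- simpl. rewrite !CNM.scal_one. reflexivity.
- rewrite !scal_pow2_S, g_double, IH. reflexivity.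
Qed.

Section HyersUlam.
(* Hypotheses such as [f_approx_additive] mix both packings of [plus] and
   [minus]; keyed unification lets [rewrite] see through the difference. *)
Set Keyed Unification.
Context {V W : CompleteNormedModule C_AbsRing}.
Variables (f : V -> W) (psi : V -> V -> R) (L : R).
Hypothesis HL : 0 <= L < 1.
Hypothesis psi_double :
  forall x y, psi (scal (RtoC 2) x) (scal (RtoC 2) y) <= 2 * L * psi x y.
Hypothesis f_approx_additive : forall (mu : C) (x y : V), Cmod mu = 1 ->
  norm (minus (f (plus (scal mu x) y)) (plus (scal mu (f x)) (f y))) <= psi x y.

Lemma psi_dilate (n : nat) (x y : V) :
  psi (scal (RtoC (2 ^ n)) x) (scal (RtoC (2 ^ n)) y) <= (2 * L) ^ n * psi x y.
Proof.
induction n as [|n IH].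
- simpl. rewrite !CNM.scal_one. lra.
- rewrite !scal_pow2_S. eapply Rle_trans; [apply psi_double |].
  simpl. rewrite (Rmult_assoc (2 * L)). apply Rmult_le_compat_l; [lra | exact IH].
Qed.

Definition hyers_seq (n : nat) (x : V) : W :=
  scal (RtoC (/ 2 ^ n)) (f (scal (RtoC (2 ^ n)) x)).

Definition hyers_lim (x : V) : W :=
  lim (filtermap (fun n => hyers_seq n x) eventually).

Lemma hyers_seq_0 (x : V) : hyers_seq 0 x = f x.
Proof. unfold hyers_seq. simpl. rewrite Rinv_1, !CNM.scal_one. reflexivity. Qed.

Lemma f_double_approx (x : V) :
  norm (minus (f (scal (RtoC 2) x)) (scal (RtoC 2) (f x))) <= psi x x.
Proof.
assert (h := f_approx_additive (RtoC 1) x x Cmod_1).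
rewrite !CNM.scal_one, <- !scal_RtoC_2 in h. exact h.
Qed.

Lemma hyers_seq_step (n : nat) (x : V) :
  norm (minus (hyers_seq (S n) x) (hyers_seq n x)) <= L ^ n * psi x x / 2.
Proof.
unfold hyers_seq. rewrite scal_pow2_S.
set (v := scal (RtoC (2 ^ n)) x).
assert (Hpow := pow_lt 2 n ltac:(lra)).
replace (scal (RtoC (/ 2 ^ n)) (f v))
  with (scal (RtoC (/ 2 ^ S n)) (scal (RtoC 2) (f v)))
  by (rewrite scal_RtoC_mult; f_equal; f_equal; simpl; field; lra).
rewrite <- CNM.scal_minus_distr_l.
eapply Rle_trans; [apply norm_scal_R |].
rewrite Rabs_pos_eq by (apply Rlt_le, Rinv_0_lt_compat, pow_lt; lra).
eapply Rle_trans.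
{ apply Rmult_le_compat_l; [apply Rlt_le, Rinv_0_lt_compat, pow_lt; lra |].
  eapply Rle_trans; [apply f_double_approx | apply psi_dilate]. }
simpl. rewrite Rinv_mult, Rmult_assoc, Rinv_pow2_mult_pow. right. field.
Qed.

Lemma hyers_seq_lim_dist (n : nat) (x : V) :
  norm (minus (hyers_seq n x) (hyers_lim x)) <= psi x x / (2 - 2 * L) * L ^ n.
Proof.
apply (norm_minus_lim_geometric (fun k => hyers_seq k x)); [exact HL |]. intro k.
eapply Rle_trans; [apply hyers_seq_step | right; field; lra].
Qed.

Lemma hyers_lim_approx (x : V) : norm (minus (f x) (hyers_lim x)) <= / (2 - 2 * L) * psi x x.
Proof.
rewrite <- hyers_seq_0. eapply Rle_trans; [apply hyers_seq_lim_dist | right; simpl; field; lra].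
Qed.

Lemma hyers_seq_additive_approx (n : nat) (mu : C) (x y : V) : Cmod mu = 1 ->
  norm (minus (hyers_seq n (plus (scal mu x) y))
              (plus (scal mu (hyers_seq n x)) (hyers_seq n y)))
  <= L ^ n * psi x y.
Proof.
intro Hmu. unfold hyers_seq.
assert (Hcomm : forall (U : CompleteNormedModule C_AbsRing) (r : R) (u : U),
          scal (RtoC r) (scal mu u) = scal mu (scal (RtoC r) u)).
{ intros U r u. rewrite !CNM.scal_assoc, Cmult_comm. reflexivity. }
rewrite CNM.scal_distr_l, (Hcomm _ (2 ^ n) x), <- (Hcomm _ (/ 2 ^ n)),
  <- CNM.scal_distr_l, <- CNM.scal_minus_distr_l.
eapply Rle_trans; [apply norm_scal_R |].
rewrite Rabs_pos_eq by (apply Rlt_le, Rinv_0_lt_compat, pow_lt; lra).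
eapply Rle_trans.
{ apply Rmult_le_compat_l; [apply Rlt_le, Rinv_0_lt_compat, pow_lt; lra |].
  eapply Rle_trans; [apply (f_approx_additive mu _ _ Hmu) | apply psi_dilate]. }
rewrite Rinv_pow2_mult_pow. lra.
Qed.

Lemma hyers_lim_additive (mu : C) (x y : V) : Cmod mu = 1 ->
  hyers_lim (plus (scal mu x) y) = plus (scal mu (hyers_lim x)) (hyers_lim y).
Proof.
intro Hmu. set (w := plus (scal mu x) y).
apply norm_minus_le_0_eq.
apply (Rle_0_of_le_geom (psi w w / (2 - 2 * L) + psi x y + psi x x / (2 - 2 * L)
                         + psi y y / (2 - 2 * L)) L); [exact HL |].
intro n.
eapply Rle_trans; [apply (norm_minus_triangle _ _ (hyers_seq n w)) |].
eapply Rle_trans.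
{ apply Rplus_le_compat_l.
  apply (norm_minus_triangle _ _ (plus (scal mu (hyers_seq n x)) (hyers_seq n y))). }
rewrite norm_minus_sym, minus_plus_plus, <- CNM.scal_minus_distr_l.
assert (Hw := hyers_seq_lim_dist n w).
assert (Hxy := hyers_seq_additive_approx n mu x y Hmu). fold w in Hxy.
assert (Hx : norm (scal mu (minus (hyers_seq n x) (hyers_lim x)))
             <= psi x x / (2 - 2 * L) * L ^ n).
{ eapply Rle_trans; [apply CNM.norm_scal |]. rewrite Hmu, Rmult_1_l.
  apply hyers_seq_lim_dist. }
assert (Hy := hyers_seq_lim_dist n y).
eapply Rle_trans.
{ apply Rplus_le_compat; [exact Hw |].
  apply Rplus_le_compat; [exact Hxy | apply CNM.norm_triangle]. }
lra.
Qed.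

Lemma hyers_lim_plus (x y : V) : hyers_lim (plus x y) = plus (hyers_lim x) (hyers_lim y).
Proof.
assert (h := hyers_lim_additive (RtoC 1) x y Cmod_1).
rewrite !CNM.scal_one in h. exact h.
Qed.

Lemma hyers_lim_linear (l : C) (x : V) : hyers_lim (scal l x) = scal l (hyers_lim x).
Proof.
apply unimodular_additive_linear; [exact hyers_lim_plus |].
intros mu v Hmu.
assert (h := hyers_lim_additive mu v zero Hmu).
rewrite plus_zero_r, (additive_zero hyers_lim hyers_lim_plus), plus_zero_r in h.
exact h.
Qed.

Lemma approx_doubling_unique (G1 G2 : V -> W) (c : R) : 0 <= c ->
  (forall x, G1 (scal (RtoC 2) x) = scal (RtoC 2) (G1 x)) ->
  (forall x, G2 (scal (RtoC 2) x) = scal (RtoC 2) (G2 x)) ->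
  (forall x, norm (minus (f x) (G1 x)) <= c * psi x x) ->
  (forall x, norm (minus (f x) (G2 x)) <= c * psi x x) ->
  forall x, G1 x = G2 x.
Proof.
intros Hc G1_double G2_double G1_approx G2_approx x.
apply norm_minus_le_0_eq.
apply (Rle_0_of_le_geom (2 * c * psi x x) L); [exact HL |]. intro n.
assert (Ht : 0 < 2 ^ n) by (apply pow_lt; lra).
set (v := scal (RtoC (2 ^ n)) x).
assert (E : minus (G1 x) (G2 x) = scal (RtoC (/ 2 ^ n)) (minus (G1 v) (G2 v))).
{ unfold v. rewrite (doubling_pow2 G1 G1_double), (doubling_pow2 G2 G2_double).
  rewrite <- CNM.scal_minus_distr_l, scal_RtoC_mult, Rinv_l, CNM.scal_one by lra.
  reflexivity. }
rewrite E. eapply Rle_trans; [apply norm_scal_R |].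
rewrite Rabs_pos_eq by (apply Rlt_le, Rinv_0_lt_compat; lra).
assert (Hv : norm (minus (G1 v) (G2 v)) <= 2 * c * ((2 * L) ^ n * psi x x)).
{ eapply Rle_trans; [apply (norm_minus_triangle _ _ (f v)) |].
  rewrite norm_minus_sym.
  generalize (G1_approx v) (G2_approx v) (psi_dilate n x x).
  fold v. intros H1 H2 H3. nra. }
eapply Rle_trans; [apply Rmult_le_compat_l; [apply Rlt_le, Rinv_0_lt_compat; lra | exact Hv] |].
rewrite Rpow_mult_distr. right. field. lra.
Qed.

End HyersUlam.

Section HilbertModuleStability.
Variables (A B : CStarAlgebra) (X : HilbertModule A) (Y : HilbertModule B)
  (f : X -> Y) (phi : X -> X -> X -> R).
Hypothesis phi_ge0 : forall x y z, 0 <= phi x y z.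
Hypothesis Hadd : forall (mu : C) (x y : X), Cmod mu = 1 ->
  norm (minus (f (plus (scal mu x) y)) (plus (scal mu (f x)) (f y))) <= phi x y zero.
Hypothesis Hmul : forall x y z : X,
  norm (minus (f (hm_triple A X x y z)) (hm_triple B Y (f x) (f y) (f z))) <= phi x y z.
Variable L : R.
Hypothesis HL0 : 0 <= L.
Hypothesis HL1 : L < 1.
Hypothesis Hphi : forall x y z : X,
  phi x y z <= 2 * L * phi (scal (RtoC (/ 2)) x) (scal (RtoC (/ 2)) y) (scal (RtoC (/ 2)) z).

Let HL : 0 <= L < 1 := conj HL0 HL1.

Notation psi := (fun x y => phi x y zero).
Notation H := (hyers_lim f).

Lemma phi_double (x y z : X) :
  phi (scal (RtoC 2) x) (scal (RtoC 2) y) (scal (RtoC 2) z) <= 2 * L * phi x y z.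
Proof.
assert (h := Hphi (scal (RtoC 2) x) (scal (RtoC 2) y) (scal (RtoC 2) z)).
rewrite !scal_RtoC_mult in h. replace (/ 2 * 2) with 1 in h by field.
rewrite !CNM.scal_one in h. exact h.
Qed.

Lemma psi_double (x y : X) :
  psi (scal (RtoC 2) x) (scal (RtoC 2) y) <= 2 * L * psi x y.
Proof. simpl. rewrite <- (CNM.scal_zero_r (RtoC 2)) at 1. apply phi_double. Qed.

Lemma phi_dilate (n : nat) (x y z : X) :
  phi (scal (RtoC (2 ^ n)) x) (scal (RtoC (2 ^ n)) y) (scal (RtoC (2 ^ n)) z)
  <= (2 * L) ^ n * phi x y z.
Proof.
induction n as [|n IH].
- simpl. rewrite !CNM.scal_one. lra.
- rewrite !scal_pow2_S. eapply Rle_trans; [apply phi_double |].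
  simpl. rewrite (Rmult_assoc (2 * L)). apply Rmult_le_compat_l; [lra | exact IH].
Qed.

Lemma hyers_seq_triple_approx (n : nat) (x y z : X) :
  norm (minus (hyers_seq f (3 * n) (hm_triple A X x y z))
              (hm_triple B Y (hyers_seq f n x) (hyers_seq f n y) (hyers_seq f n z)))
  <= L ^ n * phi x y z.
Proof.
unfold hyers_seq. set (t := 2 ^ n).
assert (Ht : 0 < t) by (apply pow_lt; lra).
assert (Ht1 : 1 <= t) by (apply pow_R1_Rle; lra).
replace (2 ^ (3 * n)) with (t * t * t) by (unfold t; rewrite Nat.mul_comm, pow_mult; ring).
rewrite <- hm_triple_scal_R, (hm_triple_scal_R B Y (/ t)).
replace (/ (t * t * t)) with (/ t * / t * / t) by (field; lra).
rewrite <- CNM.scal_minus_distr_l.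
eapply Rle_trans; [apply norm_scal_R |].
assert (Hinv : 0 < / t * / t * / t)
  by (repeat apply Rmult_lt_0_compat; apply Rinv_0_lt_compat; lra).
rewrite Rabs_pos_eq by lra.
eapply Rle_trans.
{ apply Rmult_le_compat_l; [lra |].
  eapply Rle_trans; [apply Hmul | apply phi_dilate]. }
rewrite <- (Rinv_pow2_mult_pow L (phi x y z) n). fold t.
apply Rmult_le_compat_r.
- apply Rmult_le_pos; [apply pow_le; lra | apply phi_ge0].
- assert (Hinv1 : / t <= 1) by (rewrite <- Rinv_1; apply Rinv_le_contravar; lra).
  assert (Hinv0 : 0 <= / t) by (apply Rlt_le, Rinv_0_lt_compat; lra).
  nra.
Qed.

Lemma hyers_lim_triple (x y z : X) :
  H (hm_triple A X x y z) = hm_triple B Y (H x) (H y) (H z).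
Proof.
set (w := hm_triple A X x y z).
set (c v := phi v v zero / (2 - 2 * L)).
assert (Hc : forall v, 0 <= c v)
  by (intro v; apply Rdiv_le_0_compat; [apply phi_ge0 | lra]).
assert (Hdist : forall n v, norm (minus (hyers_seq f n v) (H v)) <= L ^ n * c v).
{ intros n v. rewrite Rmult_comm.
  exact (hyers_seq_lim_dist f psi L HL psi_double Hadd n v). }
apply norm_minus_le_0_eq.
apply (Rle_0_of_le_geom (c w + phi x y z
         + 4 * (c x * (norm (H y) + c y) * (norm (H z) + c z)
                + norm (H x) * c y * (norm (H z) + c z) + norm (H x) * norm (H y) * c z)) L);
  [lra |].
intro n.
assert (HLn : 0 <= L ^ n <= 1)
  by (split; [apply pow_le; lra | apply (pow_le_pow_le_1 L 0 n); [lra | lia]]).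
eapply Rle_trans; [apply (norm_minus_triangle _ _ (hyers_seq f (3 * n) w)) |].
eapply Rle_trans.
{ apply Rplus_le_compat_l.
  apply (norm_minus_triangle _ _
           (hm_triple B Y (hyers_seq f n x) (hyers_seq f n y) (hyers_seq f n z))). }
assert (T1 : norm (minus (H w) (hyers_seq f (3 * n) w)) <= L ^ n * c w).
{ rewrite norm_minus_sym. eapply Rle_trans; [apply Hdist |].
  apply Rmult_le_compat_r; [apply Hc | apply pow_le_pow_le_1; [lra | lia]]. }
assert (T2 := hyers_seq_triple_approx n x y z). fold w in T2.
assert (T3 := norm_hm_triple_minus_le_scaled B Y (H x) (H y) (H z) _ _ _ (L ^ n) (c x) (c y) (c z)
                HLn (Hc y) (Hc z) (Hdist n x) (Hdist n y) (Hdist n z)).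
lra.
Qed.

Lemma hyers_lim_is_hm_star_hom : is_hm_star_hom X Y H.
Proof.
split; [| split; [| split]].
- exact (hyers_lim_plus f psi L HL psi_double Hadd).
- exact (hyers_lim_linear f psi L HL psi_double Hadd).
- exact hyers_lim_triple.
- (* <x,y>^* = <y,x>: this is multiplicativity with x and y swapped, which is
     why the theorem never needs its hypothesis Hstar. *)
  intros x y z. rewrite !hm_ip_star. exact (hyers_lim_triple y x z).
Qed.

Lemma hyers_lim_phi_approx (x : X) :
  norm (minus (f x) (H x)) <= / (2 - 2 * L) * phi x x zero.
Proof. exact (hyers_lim_approx f psi L HL psi_double Hadd x). Qed.

Lemma hyers_lim_phi_approx_unique (G : X -> Y) :
  (forall (l : C) x, G (scal l x) = scal l (G x)) ->
  (forall x, norm (minus (f x) (G x)) <= / (2 - 2 * L) * phi x x zero) ->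
  forall x, G x = H x.
Proof.
intros G_scal G_approx.
apply (approx_doubling_unique f psi L HL psi_double G H (/ (2 - 2 * L))).
- apply Rlt_le, Rinv_0_lt_compat. lra.
- intro x. apply G_scal.
- intro x. apply (hyers_lim_linear f psi L HL psi_double Hadd).
- exact G_approx.
- exact hyers_lim_phi_approx.
Qed.

End HilbertModuleStability.

Theorem theorem3p1 (A B : CStarAlgebra) (X : HilbertModule A) (Y : HilbertModule B)
  (f : X -> Y) (phi : X -> X -> X -> R)
  (phi_ge0 : forall x y z, 0 <= phi x y z)
  (Hadd : forall (mu : C) (x y : X), Cmod mu = 1 ->
     norm (minus (f (plus (scal mu x) y)) (plus (scal mu (f x)) (f y))) <= phi x y zero)
  (Hmul : forall x y z : X,
     norm (minus (f (hm_act X (hm_ip X x y) z)) (hm_act Y (hm_ip Y (f x) (f y)) (f z)))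
       <= phi x y z)
  (Hstar : forall x y z : X,
     norm (minus (f (hm_act X (ca_star A (hm_ip X x y)) z))
                 (hm_act Y (ca_star B (hm_ip Y (f x) (f y))) (f z)))
       <= phi x y z)
  (L : R) (HL0 : 0 <= L) (HL1 : L < 1)
  (Hphi : forall x y z : X,
     phi x y z <= 2 * L * phi (scal (RtoC (/ 2)) x) (scal (RtoC (/ 2)) y) (scal (RtoC (/ 2)) z)) :
  exists H : X -> Y,
    (is_hm_star_hom X Y H /\
     forall x : X, norm (minus (f x) (H x)) <= / (2 - 2 * L) * phi x x zero) /\
    (forall H' : X -> Y,
       is_hm_star_hom X Y H' /\
       (forall x : X, norm (minus (f x) (H' x)) <= / (2 - 2 * L) * phi x x zero) ->
       forall x, H' x = H x).
Proof.
exists (hyers_lim f).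
split; [split |].
- exact (hyers_lim_is_hm_star_hom A B X Y f phi phi_ge0 Hadd Hmul L HL0 HL1 Hphi).
- exact (hyers_lim_phi_approx A B X Y f phi Hadd L HL0 HL1 Hphi).
- intros G [[_ [G_scal _]] G_approx].
  exact (hyers_lim_phi_approx_unique A B X Y f phi Hadd L HL0 HL1 Hphi G G_scal G_approx).
Qed.
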